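(* Let $X=(X_1,\dots,X_d)$ be a random vector with values in $\{0,1\}^d$ such that $\mathbb{P}(X=x)>0$ for every $x\in\{0,1\}^d$, let $G:\{0,1\}^d\to\mathbb{R}$, and let $\Gamma=(\Gamma_{A,B})_{A,B\subseteq D}$ with $\Gamma_{A,B}:=\mathbb{E}[e_A(X_A)e_B(X_B)]$ (an invertible matrix). For $A\subseteq D$ define $e^\star_A(X):=\sum_{B\subseteq D}(\Gamma^{-1})_{A,B}\,e_B(X_B)$. Then for all $A,B\subseteq D$, $\langle e_B(X_B),e^\star_A(X)\rangle=\mathbf{1}_{\{A=B\}}$, and $$G(X)=\sum_{A\subseteq D}\langle G(X),e^\star_A(X)\rangle\, e_A(X_A)\quad\text{a.s.}$$
   Context: $D=\{1,\dots,d\}$; for $A\subseteq D$, $X_A:=(X_i)_{i\in A}$, $\mathbf{P}_A(x_A):=\mathbb{P}(X_A=x_A)$, and $e_A(X_A):=\dfrac{(-1)^{\sum_{j\in A}X_j}}{\mathbf{P}_A(X_A)}$ with $e_\emptyset(X_\emptyset)=1$. The inner product is $\langle U,V\rangle:=\mathbb{E}[UV]$ for real random variables $U,V$ that are functions of $X$. *)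

From mathcomp Require Import all_boot all_order all_algebra.
Set Implicit Arguments. Unset Strict Implicit. Unset Printing Implicit Defensive.
Import Order.TTheory GRing.Theory Num.Theory.
Local Open Scope ring_scope.

Section Defs.
Variables (R : realFieldType) (d : nat).

(* outcomes x in {0,1}^d, coordinates indexed by 'I_d (D = {1..d} shifted) *)
Definition outcome := {ffun 'I_d -> bool}.

Variable p : outcome -> R.  (* p x = P(X = x) *)

Definition expect (U : outcome -> R) : R := \sum_x p x * U x.

Definition inner (U V : outcome -> R) : R := expect (fun x => U x * V x).

Definition marg (A : {set 'I_d}) (x : outcome) : R :=
  \sum_(y : outcome | [forall j in A, y j == x j]) p y.

Definition ebasis (A : {set 'I_d}) (x : outcome) : R :=
  (-1) ^+ (\sum_(j in A) nat_of_bool (x j))%N / marg A x.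

Definition nsets := #|{: {set 'I_d}}|.

Definition Gamma : 'M[R]_nsets :=
  \matrix_(i, j) inner (ebasis (enum_val i)) (ebasis (enum_val j)).

Definition estar (A : {set 'I_d}) (x : outcome) : R :=
  \sum_(B : {set 'I_d}) invmx Gamma (enum_rank A) (enum_rank B) * ebasis B x.

End Defs.

(* e_A is the Walsh character (-1)^(sum_(j in A) x_j) divided by the marginal
   P_A.  Flipping a coordinate j in A \ B negates the character of A and leaves
   e_B unchanged, so sum_x walsh_A(x) e_B(x) vanishes unless A is a subset of B,
   whereas sum_x walsh_A(x) e_A(x) = sum_x 1 / P_A(x) > 0.  This triangularity
   makes the 2^d functions e_A linearly independent, hence a basis of the
   functions of X.  Their Gram matrix for the positive weight p is therefore
   invertible, the e*_A form the dual basis, and the expansion of G is the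
   coordinate formula in that basis. *)

From mathcomp Require Import all_boot all_order all_algebra zify.
Set Implicit Arguments. Unset Strict Implicit. Unset Printing Implicit Defensive.
Import Order.TTheory GRing.Theory Num.Theory.
Local Open Scope ring_scope.

Lemma sum_enum_val (R : nmodType) (T : finType) (F : T -> R) :
  \sum_(k < #|T|) F (enum_val k) = \sum_x F x.
Proof. by rewrite -(big_enum_val (A := T)); apply: eq_bigl => x; rewrite inE. Qed.

Section FunctionFamilies.
Variables (R : realFieldType) (I T : finType) (f : I -> T -> R).

Definition free_fun := forall c : I -> R,
  (forall x, \sum_i c i * f i x = 0) -> forall i, c i = 0.

Definition fun_mx : 'M[R]_(#|I|, #|T|) :=
  \matrix_(i, k) f (enum_val i) (enum_val k).

Lemma mul_row_fun_mx (v : 'rV_#|I|) k :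
  (v *m fun_mx) 0 k = \sum_i v 0 (enum_rank i) * f i (enum_val k).
Proof.
rewrite mxE -[RHS]sum_enum_val; apply: eq_bigr => i _.
by rewrite enum_valK mxE.
Qed.

Hypothesis f_free : free_fun.

Lemma fun_mx_free : row_free fun_mx.
Proof.
apply: inj_row_free => v vE0; apply/rowP => i; rewrite mxE.
rewrite -[i]enum_valK; apply: (f_free (c := fun a => v 0 (enum_rank a))) => x.
by rewrite -[x]enum_rankK -mul_row_fun_mx vE0 mxE.
Qed.

Lemma free_fun_span : (#|T| <= #|I|)%N ->
  forall g : T -> R, exists c : I -> R, forall x, g x = \sum_i c i * f i x.
Proof.
move=> le_TI g.
have : row_full fun_mx.
  by rewrite -col_leq_rank (leq_trans le_TI) ?row_leq_rank ?fun_mx_free.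
case/row_fullP=> B BE.
exists (fun i => (\row_k g (enum_val k) *m B) 0 (enum_rank i)) => x.
by rewrite -[x]enum_rankK -mul_row_fun_mx -mulmxA BE mulmx1 mxE.
Qed.

Variable w : T -> R.
Hypothesis w_pos : forall x, 0 < w x.

Definition gram_mx : 'M[R]_#|I| :=
  \matrix_(i, j) \sum_x w x * (f (enum_val i) x * f (enum_val j) x).

Lemma gram_mxE :
  gram_mx = fun_mx *m diag_mx (\row_k w (enum_val k)) *m fun_mx^T.
Proof.
apply/matrixP => i j; rewrite mul_mx_diag !mxE -[LHS]sum_enum_val.
by apply: eq_bigr => k _; rewrite !mxE mulrCA mulrA.
Qed.

Lemma gram_mx_unit : gram_mx \in unitmx.
Proof.
rewrite -row_free_unit; apply: inj_row_free => v vG0.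
set u := v *m fun_mx.
have uDu0 : \sum_k w (enum_val k) * (u 0 k * u 0 k) = 0.
  have := congr1 (fun M : 'M_1 => M 0 0) (congr1 (mulmx^~ v^T) vG0).
  rewrite mul0mx gram_mxE !mulmxA -/u -mulmxA -trmx_mul -/u.
  rewrite mxE [X in _ = X]mxE => vGv0; rewrite -[RHS]vGv0.
  by apply: eq_bigr => k _; rewrite mul_mx_diag !mxE mulrCA mulrA.
have u0 : u = 0.
  apply/rowP => k; rewrite [RHS]mxE.
  have wu2_ge0 l : true -> 0 <= w (enum_val l) * (u 0 l * u 0 l).
    by move=> _; rewrite mulr_ge0 -?expr2 ?sqr_ge0 ?ltW.
  move/eqP: (psumr_eq0P wu2_ge0 uDu0 (i := k) isT).
  by rewrite !mulf_eq0 orbb (gt_eqF (w_pos _)) => /eqP.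
by apply: (row_free_inj fun_mx_free); rewrite mul0mx.
Qed.

End FunctionFamilies.

Section WalshBasis.
Variables (R : realFieldType) (d : nat) (p : outcome d -> R).
Hypothesis p_pos : forall x, 0 < p x.

Definition walsh (A : {set 'I_d}) (x : outcome d) : R :=
  (-1) ^+ (\sum_(j in A) nat_of_bool (x j))%N.

Definition flip (j : 'I_d) (x : outcome d) : outcome d :=
  [ffun i => if i == j then ~~ x i else x i].

Lemma flipK (j : 'I_d) : involutive (flip j).
Proof. by move=> x; apply/ffunP => i; rewrite !ffunE; case: eqP; rewrite ?negbK. Qed.

Lemma flip_neq (j i : 'I_d) (x : outcome d) : i != j -> flip j x i = x i.
Proof. by rewrite ffunE => /negPf ->. Qed.

Lemma walsh_flip (A : {set 'I_d}) (j : 'I_d) (x : outcome d) :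
  j \in A -> walsh A (flip j x) = - walsh A x.
Proof.
move=> jA; rewrite /walsh !(bigD1 j jA) /= !exprD ffunE eqxx.
rewrite (eq_bigr (fun i => nat_of_bool (x i))) => [|i /andP[_ ij]]; last first.
  by rewrite flip_neq.
by case: (x j); rewrite ?expr0 ?expr1 ?mulN1r ?mul1r ?opprK.
Qed.

Lemma eq_walsh (A : {set 'I_d}) (x y : outcome d) :
  {in A, x =1 y} -> walsh A x = walsh A y.
Proof. by move=> exy; rewrite /walsh (eq_bigr _ (fun i iA => congr1 _ (exy i iA))). Qed.

Lemma eq_marg (A : {set 'I_d}) (x y : outcome d) :
  {in A, x =1 y} -> marg p A x = marg p A y.
Proof. by move=> exy; apply: eq_bigl => z; apply: eq_forallb_in => i iA; rewrite exy. Qed.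

Lemma ebasis_flip (B : {set 'I_d}) (j : 'I_d) (x : outcome d) :
  j \notin B -> ebasis p B (flip j x) = ebasis p B x.
Proof.
move=> jB; have fxB : {in B, flip j x =1 x}.
  by move=> i iB; apply: flip_neq; apply: contraNneq jB => <-.
by rewrite /ebasis -/(walsh B _) -/(walsh B x) (eq_walsh fxB) (eq_marg fxB).
Qed.

Lemma marg_gt0 (A : {set 'I_d}) (x : outcome d) : 0 < marg p A x.
Proof.
rewrite /marg (bigD1 x) /=; last by apply/forall_inP.
by rewrite ltr_wpDr ?p_pos // sumr_ge0 // => y _; apply: ltW.
Qed.

Lemma sum_walsh_ebasis_eq0 (A B : {set 'I_d}) (j : 'I_d) :
  j \in A -> j \notin B -> \sum_x walsh A x * ebasis p B x = 0.
Proof.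
move=> jA jB; apply/eqP; rewrite -[_ == 0](@mulrn_eq0 _ _ 2) mulr2n.
rewrite {2}(reindex_inj (can_inj (flipK j))) -big_split /=.
by rewrite big1 // => x _; rewrite walsh_flip // ebasis_flip // mulNr addrN.
Qed.

Lemma sum_walsh_ebasis_gt0 (A : {set 'I_d}) : 0 < \sum_x walsh A x * ebasis p A x.
Proof.
have -> : \sum_x walsh A x * ebasis p A x = \sum_x (marg p A x)^-1.
  apply: eq_bigr => x _; rewrite /ebasis -/(walsh A x) mulrA /walsh -exprD.
  by rewrite addnn -signr_odd odd_double mul1r.
rewrite (bigD1 ([ffun => false] : outcome d)) //=.
rewrite ltr_wpDr ?invr_gt0 ?marg_gt0 // sumr_ge0 // => x _.
by rewrite invr_ge0 ltW ?marg_gt0.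
Qed.

Lemma ebasis_free : free_fun (ebasis p).
Proof.
move=> c c0.
have orth B : \sum_C c C * \sum_x walsh B x * ebasis p C x = 0.
  have : \sum_x walsh B x * \sum_C c C * ebasis p C x = 0.
    by rewrite big1 // => x _; rewrite c0 mulr0.
  under eq_bigr => x _ do rewrite mulr_sumr.
  rewrite exchange_big /= => sum0; rewrite -[RHS]sum0.
  by apply: eq_bigr => C _; rewrite mulr_sumr; apply: eq_bigr => x _; rewrite mulrCA.
(* Pairing with walsh B kills every c C with B not a subset of C; the c C with
   B a proper subset of C vanish by induction on d - #|B|. *)
suff IH n (B : {set 'I_d}) : (d - #|B| < n)%N -> c B = 0.
  by move=> B; apply: (IH (d - #|B|).+1).
elim: n B => [//|n IHn] B ltBn.
have := orth B; rewrite (bigD1 B) //= [X in _ + X]big1 ?addr0 => [/eqP|C neCB].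
  by rewrite mulf_eq0 (gt_eqF (sum_walsh_ebasis_gt0 B)) orbF => /eqP.
have [sBC | /subsetPn[j jB jC]] := boolP (B \subset C); last first.
  by rewrite (sum_walsh_ebasis_eq0 jB jC) mulr0.
have ltBC : (#|B| < #|C|)%N by rewrite proper_card // properEneq eq_sym neCB.
have leCd : (#|C| <= d)%N by rewrite -[X in (_ <= X)%N]card_ord max_card.
by rewrite IHn ?mul0r //; lia.
Qed.

Lemma card_outcome_le : (#|outcome d| <= #|{set 'I_d}|)%N.
Proof.
apply: (@leq_card _ _ (fun x : outcome d => [set i | x i])) => x y /setP exy.
by apply/ffunP => i; have := exy i; rewrite !inE.
Qed.

Lemma Gamma_unitmx : Gamma p \in unitmx.
Proof. exact (gram_mx_unit ebasis_free p_pos). Qed.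

Lemma innerC (u v : outcome d -> R) : inner p u v = inner p v u.
Proof. by rewrite /inner /expect; apply: eq_bigr => x _; rewrite [u x * _]mulrC. Qed.

Lemma eq_innerl (g h u : outcome d -> R) : g =1 h -> inner p g u = inner p h u.
Proof. by move=> gh; rewrite /inner /expect; apply: eq_bigr => x _; rewrite gh. Qed.

Lemma inner_suml (I : finType) (c : I -> R) (h : I -> outcome d -> R)
    (u : outcome d -> R) :
  inner p (fun x => \sum_i c i * h i x) u = \sum_i c i * inner p (h i) u.
Proof.
rewrite /inner /expect; under eq_bigr => x _ do rewrite mulr_suml mulr_sumr.
rewrite exchange_big; apply: eq_bigr => i _; rewrite mulr_sumr.
by apply: eq_bigr => x _; rewrite -(mulrA (c i)) mulrCA.
Qed.

Lemma inner_ebasis_estar (A B : {set 'I_d}) :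
  inner p (ebasis p B) (estar p A) = (A == B)%:R.
Proof.
have := congr1 (fun M : 'M[R]_(nsets d) => M (enum_rank A) (enum_rank B))
  (mulVmx Gamma_unitmx).
rewrite mxE [RHS]mxE (inj_eq enum_rank_inj) => <-.
rewrite innerC /estar inner_suml -[LHS]sum_enum_val; apply: eq_bigr => k _.
by rewrite enum_valK mxE enum_rankK.
Qed.

Lemma inner_estar_coef (c : {set 'I_d} -> R) (G : outcome d -> R) (A : {set 'I_d}) :
  (forall x, G x = \sum_C c C * ebasis p C x) -> inner p G (estar p A) = c A.
Proof.
move=> Gc; rewrite (eq_innerl _ Gc) inner_suml (bigD1 A) //= big1 ?addr0.
  by rewrite inner_ebasis_estar eqxx mulr1.
by move=> C neCA; rewrite inner_ebasis_estar eq_sym (negPf neCA) mulr0.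
Qed.

End WalshBasis.

Theorem corollary3 (R : realFieldType) (d : nat) (p : outcome d -> R)
  (p_pos : forall x, 0 < p x) (p_sum : \sum_x p x = 1)
  (G : outcome d -> R) :
  Gamma p \in unitmx /\
  (forall A B : {set 'I_d},
      inner p (ebasis p B) (estar p A) = (A == B)%:R) /\
  (forall x, 0 < p x ->
      G x = \sum_(A : {set 'I_d}) inner p G (estar p A) * ebasis p A x).
Proof.
split; first exact: Gamma_unitmx p_pos.
split; first exact: inner_ebasis_estar p_pos.
move=> x _; have [c Gc] := free_fun_span (ebasis_free p_pos) (card_outcome_le d) G.
by rewrite Gc; apply: eq_bigr => A _; rewrite (inner_estar_coef p_pos _ Gc).
Qed.
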